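(* Assume $q\neq0$. Let $i,j,k,l,r$ be integers with $i+j=k+l$. Then $$u_ih_j-u_kh_l=q^r\left(u_{i-r}h_{j-r}-u_{k-r}h_{l-r}\right)$$ and $$u_iw_j-u_kw_l=q^r\left(u_{i-r}w_{j-r}-u_{k-r}w_{l-r}\right).$$
   Context: Let $p,q,a,b$ be complex numbers with $q\neq0$. The sequence $(u_n)$ is defined by $u_0=0$, $u_1=1$, $u_n=pu_{n-1}-qu_{n-2}$. The Horadam sequence $(w_n)$ is defined by $w_0=a$, $w_1=b$, $w_n=pw_{n-1}-qw_{n-2}$. The Horadam-Lucas sequence $(h_n)$ is defined by $h_0=2b-ap$, $h_1=bp-2aq$, $h_n=ph_{n-1}-qh_{n-2}$. All are extended to all integer indices by $x_{n-2}=(px_{n-1}-x_n)/q$. *)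

From mathcomp Require Import all_boot all_order all_algebra.
From mathcomp Require Import all_reals.
From mathcomp Require Import complex.
Set Implicit Arguments. Unset Strict Implicit. Unset Printing Implicit Defensive.
Import Order.TTheory GRing.Theory Num.Theory.
Local Open Scope ring_scope.

Section Seqs.
Variable (F : fieldType) (p q : F).

Fixpoint fwd (x0 x1 : F) (n : nat) : F * F :=
  match n with
  | 0%N => (x0, x1)
  | n'.+1 => let: (a, b) := fwd x0 x1 n' in (b, p * b - q * a)
  end.

(* backward pair (x_{-n}, x_{-n+1}) for n : nat, using x_{m-2} = (p x_{m-1} - x_m)/q *)
Fixpoint bwd (x0 x1 : F) (n : nat) : F * F :=
  match n with
  | 0%N => (x0, x1)
  | n'.+1 => let: (a, b) := bwd x0 x1 n' in ((p * a - b) / q, a)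
  end.

(* second-order linear recurrence x_n = p x_{n-1} - q x_{n-2}, x_0 = x0, x_1 = x1,
   extended to all integer indices *)
Definition lrec (x0 x1 : F) (n : int) : F :=
  match n with
  | Posz m => (fwd x0 x1 m).1
  | Negz m => (bwd x0 x1 m.+1).1
  end.

Definition useq : int -> F := lrec 0 1.
Definition wseq (a b : F) : int -> F := lrec a b.
Definition hseq (a b : F) : int -> F := lrec (2 * b - a * p) (b * p - 2 * a * q).
End Seqs.

(* For any two solutions y, x of x_{n+2} = p x_{n+1} - q x_n (u, w and h are
   such), the skew product y_{a+1} x_{b+1} - q y_a x_b depends only on a + b.
   Comparing it at (i-1, j-1) and (k-1, l-1) gives
   y_i x_j - y_k x_l = q (y_{i-1} x_{j-1} - y_{k-1} x_{l-1}) whenever i + j = k + l,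
   so s |-> q^s (y_{i-s} x_{j-s} - y_{k-s} x_{l-s}) is constant in s. *)
From mathcomp Require Import all_boot all_order all_algebra.
From mathcomp Require Import all_reals.
From mathcomp Require Import complex.
From mathcomp Require Import ring zify.
Import Order.TTheory GRing.Theory Num.Theory.
Local Open Scope ring_scope.

Lemma int_shift_invariant {T : Type} (g : int -> T) :
  (forall t, g (t + 1) = g t) -> forall t, g t = g 0.
Proof.
move=> gS; elim/int_ind => [//|n IHn|n IHn].
- by rewrite -IHn -[in RHS]gS -PoszD addn1.
- by rewrite -IHn -gS; congr g; lia.
Qed.

Section SkewProduct.
Variables (F : fieldType) (p q : F).

Definition is_lrec (x : int -> F) := forall n, x (n + 2) = p * x (n + 1) - q * x n.

Lemma lrec_is_lrec x0 x1 : q != 0 -> is_lrec (lrec p q x0 x1).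
Proof.
move=> q_neq0; case=> [m|[|[|m]]].
- have -> : Posz m + 2 = Posz m.+2 by rewrite -PoszD addn2.
  have -> : Posz m + 1 = Posz m.+1 by rewrite -PoszD addn1.
  by rewrite /lrec /=; case: (fwd p q x0 x1 m).
- by rewrite /lrec /=; field.
- by rewrite /lrec /=; field.
- have -> : Negz m.+2 + 2 = Negz m by rewrite !NegzE; lia.
  have -> : Negz m.+2 + 1 = Negz m.+1 by rewrite !NegzE; lia.
  by rewrite /lrec /=; case: (bwd p q x0 x1 m) => x y /=; field.
Qed.

Variables (y x : int -> F).
Hypotheses (y_lrec : is_lrec y) (x_lrec : is_lrec x).

Definition skew_prod (a b : int) := y (a + 1) * x (b + 1) - q * y a * x b.

Lemma skew_prodSl a b : skew_prod (a + 1) b = skew_prod a (b + 1).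
Proof.
rewrite /skew_prod -!addrA (_ : 1 + 1 = 2) // y_lrec x_lrec; ring.
Qed.

Lemma skew_prod_eq a b c d : a + b = c + d -> skew_prod a b = skew_prod c d.
Proof.
move=> sum_eq.
have shift t : skew_prod (a + t) (b - t) = skew_prod a b.
  have := int_shift_invariant (fun t => skew_prod (a + t) (b - t)).
  rewrite addr0 subr0; apply=> {}t.
  by rewrite (_ : b - t = b - (t + 1) + 1) ?addrA ?skew_prodSl //; lia.
by rewrite -(shift (c - a)); congr skew_prod; lia.
Qed.

Lemma cross_diff_step i j k l : i + j = k + l ->
  y i * x j - y k * x l = q * (y (i - 1) * x (j - 1) - y (k - 1) * x (l - 1)).
Proof.
move=> sum_eq; have := @skew_prod_eq (i - 1) (j - 1) (k - 1) (l - 1).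
rewrite /skew_prod !subrK => /(_ ltac:(lia)) skew_eq.
by rewrite -[y i * x j](subrK (q * y (i - 1) * x (j - 1))) skew_eq; ring.
Qed.

Lemma cross_diff_shift i j k l r : q != 0 -> i + j = k + l ->
  y i * x j - y k * x l = q ^ r * (y (i - r) * x (j - r) - y (k - r) * x (l - r)).
Proof.
move=> q_neq0 sum_eq.
pose D s := y (i - s) * x (j - s) - y (k - s) * x (l - s).
have := int_shift_invariant (fun s => q ^ s * D s).
rewrite expr0z mul1r /D !subr0 => -> // s.
rewrite expfzDr // expr1z -mulrA [in RHS]cross_diff_step; last lia.
by rewrite opprD !addrA.
Qed.

End SkewProduct.

Theorem mainTheorem16 (R : realType) (p q a b : R[i]) (i j k l r : int) :
  q != 0 -> i + j = k + l ->
  useq p q i * hseq p q a b j - useq p q k * hseq p q a b l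
    = q ^ r * (useq p q (i - r) * hseq p q a b (j - r)
               - useq p q (k - r) * hseq p q a b (l - r))
  /\
  useq p q i * wseq p q a b j - useq p q k * wseq p q a b l
    = q ^ r * (useq p q (i - r) * wseq p q a b (j - r)
               - useq p q (k - r) * wseq p q a b (l - r)).
Proof.
by move=> q_neq0 sum_eq; split; apply: cross_diff_shift => //; apply: lrec_is_lrec.
Qed.
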